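(* Let $A$ be a circular $m\times n$ matrix, $b\in\mathbb{Z}_+^m$ and $\beta$ a nonnegative integer. Then the polytope $Q_\beta(A,b):=\{x\in\mathbb{R}^n: Ax\ge b,\ x\ge0,\ \mathbf{1}^Tx=\beta\}$ is integral (all its vertices are integral).
   Context: Notation: $[n]=\{1,\dots,n\}$ with addition mod $n$; for $a,c\in[n]$ with $t\ge0$ minimal such that $a+t\equiv c\pmod n$, $[a,c)_n=\{a,a+1,\dots,a+t-1\}$ (mod $n$). An $m\times n$ $\{0,1\}$-matrix $A$ (columns indexed by $[n]$) is circular if for each row $i$ there are $\ell_i\in[n]$ and an integer $k_i$ with $2\le k_i\le n-1$ such that row $i$ is the incidence vector of $[\ell_i,\ell_i+k_i)_n$. $\mathbf{1}$ denotes the all-ones vector. *)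

From HB Require Import structures.
From mathcomp Require Import all_boot all_order all_algebra.
Set Implicit Arguments. Unset Strict Implicit. Unset Printing Implicit Defensive.
Import Order.TTheory GRing.Theory Num.Theory.
Local Open Scope ring_scope.

(* Columns are indexed by 'I_n = {0,...,n-1} (0-based shift of [n]).
   j lies in the cyclic interval [l, l+k)_n iff (j - l) mod n < k. *)

Definition cyc_mem (n : nat) (l : 'I_n) (k : nat) (j : 'I_n) : bool :=
  ((j + n - l) %% n < k)%N.

Definition circular (R : nzRingType) (m n : nat) (A : 'M[R]_(m, n)) : Prop :=
  forall i : 'I_m, exists (l : 'I_n) (k : nat),
    (2 <= k)%N /\ (k <= n - 1)%N /\
    forall j : 'I_n, A i j = (cyc_mem l k j)%:R.

Definition Qbeta (R : realFieldType) (m n : nat) (A : 'M[R]_(m, n))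
    (b : 'I_m -> nat) (beta : nat) (x : 'cV[R]_n) : Prop :=
  (forall i : 'I_m, (b i)%:R <= (A *m x) i 0) /\
  (forall j : 'I_n, 0 <= x j 0) /\
  \sum_(j < n) x j 0 = beta%:R.

Definition vertex (R : realFieldType) (n : nat) (P : 'cV[R]_n -> Prop)
    (x : 'cV[R]_n) : Prop :=
  P x /\ forall (y z : 'cV[R]_n) (t : R), P y -> P z -> 0 < t -> t < 1 ->
    x = t *: y + (1 - t) *: z -> y = z.

Definition integral_vector (R : realFieldType) (n : nat) (x : 'cV[R]_n) : Prop :=
  forall j : 'I_n, exists c : int, x j 0 = c%:~R.

Definition integral_polytope (R : realFieldType) (n : nat)
    (P : 'cV[R]_n -> Prop) : Prop :=
  forall x, vertex P x -> integral_vector x.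

(** In the prefix-sum coordinates [y_c = x_0 + ... + x_(c-1)], every row of a
    circular system reads [y_u - y_v] or [y_u - y_v + y_n], and [y_n = beta].
    At a point of [Q_beta(A,b)], every tight constraint therefore says that some
    difference [y_u - y_v] (or [x_j = y_(j+1) - y_j]) is an integer.  If some
    [y_c0] were fractional, shifting by [+-eps] all the [y_c] congruent to [y_c0]
    modulo the integers keeps the tight constraints tight, keeps the others
    satisfied for small [eps], and leaves [y_0 = 0] and [y_n] fixed; the point
    would then be the midpoint of two distinct points of the polytope. *)

From mathcomp Require Import all_boot all_order all_algebra.
From mathcomp Require Import zify ring lra.
From mathcomp Require Import boolp.
Import Order.TTheory GRing.Theory Num.Theory.
Set Implicit Arguments. Unset Strict Implicit. Unset Printing Implicit Defensive.
Local Open Scope ring_scope.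

Definition is_int (R : pzRingType) (a : R) : Prop := exists z : int, a = z%:~R.

Lemma is_int_nat (R : pzRingType) (k : nat) : is_int (k%:R : R).
Proof. by exists k%:Z. Qed.

Lemma is_intD (R : pzRingType) (a c : R) : is_int a -> is_int c -> is_int (a + c).
Proof. by move=> [z ->] [z' ->]; exists (z + z'); rewrite rmorphD. Qed.

Lemma is_intB (R : pzRingType) (a c : R) : is_int a -> is_int c -> is_int (a - c).
Proof. by move=> [z ->] [z' ->]; exists (z - z'); rewrite rmorphB. Qed.

Section PrefixSums.
Variables (V : zmodType) (n : nat).
Implicit Types (x : 'cV[V]_n) (c : nat).

Definition psum x c : V := \sum_(j < n | (j < c)%N) x j 0.

Lemma psum0 x : psum x 0 = 0.
Proof. by rewrite /psum big_pred0. Qed.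

Lemma psum_total x c : (n <= c)%N -> psum x c = \sum_j x j 0.
Proof. by move=> hc; apply: eq_bigl => j; rewrite (leq_trans (ltn_ord j) hc). Qed.

Lemma psumS x (j : 'I_n) : psum x j.+1 = psum x j + x j 0.
Proof.
rewrite /psum (bigD1 j) //= addrC; congr (_ + _); apply: eq_bigl => i.
rewrite ltnS leq_eqVlt; have [->|ne_ij] := eqVneq i j; first by rewrite ltnn andbF.
by rewrite val_eqE (negPf ne_ij) andbT.
Qed.

Lemma psum_natmul x c : psum x c = \sum_j x j 0 *+ (j < c)%N.
Proof. by rewrite /psum big_mkcond; apply: eq_bigr => j _; rewrite mulrb. Qed.

Lemma psum_telescope (p : nat -> V) c : (c <= n)%N ->
  psum (\col_j (p j.+1 - p j)) c = p c - p 0%N.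
Proof.
elim: c => [|c IH] hc; first by rewrite psum0 subrr.
by rewrite (psumS _ (Ordinal hc)) IH ?(ltnW hc) // mxE addrC addrA subrK.
Qed.

End PrefixSums.

Definition psum_rows (R : pzRingType) (m n : nat) (A : 'M[R]_(m, n)) : Prop :=
  forall i : 'I_m, exists (u v : 'I_n.+1) (w : bool), forall F : 'cV[R]_n,
    (A *m F) i 0 = psum F u - psum F v + psum F n *+ w.

Lemma cyc_mem_split n (l : 'I_n) k (j : 'I_n) : (k <= n)%N ->
  (cyc_mem l k j + (j < l) = (j < l + k) + (j < l + k - n))%N.
Proof.
move=> hk; rewrite /cyc_mem; have hj := ltn_ord j; have hl := ltn_ord l.
case: (ltnP j l) => hjl.
  by rewrite modn_small; lia.
by rewrite (_ : j + n - l = j - l + n)%N ?modnDr ?modn_small; lia.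
Qed.

Lemma sum_cyc_mem (V : zmodType) n (l : 'I_n) k (F : 'cV[V]_n) : (k <= n)%N ->
  \sum_j F j 0 *+ cyc_mem l k j = psum F (l + k) - psum F l + psum F (l + k - n).
Proof.
move=> hk; apply: (addIr (psum F l)); rewrite addrAC subrK !psum_natmul -!big_split.
by apply: eq_bigr => j _ /=; rewrite -mulrnDr cyc_mem_split //; apply: mulrnDr.
Qed.

Lemma circular_psum_rows (R : nzRingType) m n (A : 'M[R]_(m, n)) :
  circular A -> psum_rows A.
Proof.
move=> hA i; have [l [k [_ [hkn hAi]]]] := hA i.
have hk : (k <= n)%N by lia.
have hrow F : (A *m F) i 0 = psum F (l + k) - psum F l + psum F (l + k - n).
  by rewrite mxE -sum_cyc_mem //; apply: eq_bigr => j _; rewrite hAi mulr_natl.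
have hl : (l < n.+1)%N := leqW (ltn_ord l).
case: (leqP (l + k) n) => hlk.
  have hu : (l + k < n.+1)%N by [].
  exists (Ordinal hu), (Ordinal hl), false => F /=.
  by rewrite hrow (_ : l + k - n = 0)%N ?psum0 ?addr0 //; lia.
have hu : (l + k - n < n.+1)%N by have := ltn_ord l; lia.
exists (Ordinal hu), (Ordinal hl), true => F /=.
rewrite hrow (psum_total F (ltnW hlk)) -(psum_total F (leqnn n)) mulr1n.
by rewrite [RHS]addrC addrA addrAC.
Qed.

Lemma exists_small_scale (R : realFieldType) (I : finType) (c s : I -> R) :
  (forall i, 0 <= s i) -> (forall i, c i != 0 -> 0 < s i) ->
  exists2 eps : R, 0 < eps & forall i, eps * `|c i| <= s i.
Proof.
move=> s_ge0 s_gt0; exists (\big[Order.min/1]_(i | c i != 0) (s i / `|c i|)).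
  by apply: lt_bigmin => // i ci0; rewrite divr_gt0 ?normr_gt0 ?s_gt0.
move=> i; have [->|ci0] := eqVneq (c i) 0; first by rewrite normr0 mulr0.
by rewrite -ler_pdivlMr ?normr_gt0 //; apply: bigmin_le_cond.
Qed.

Lemma ler_addr_scaled (R : realDomainType) (a b c e eps : R) :
  eps * `|c| <= a - b -> `|e| <= eps -> b <= a + e * c.
Proof.
move=> hs he; have : `|e * c| <= a - b.
  by rewrite normrM (le_trans _ hs) // ler_wpM2r.
by rewrite ler_norml => /andP[? _]; lra.
Qed.

Lemma Qbeta_perturb (R : realFieldType) m n (A : 'M[R]_(m, n)) b beta
    (x d : 'cV[R]_n) :
  Qbeta A b beta x -> \sum_j d j 0 = 0 ->
  (forall i, (A *m d) i 0 != 0 -> (b i)%:R < (A *m x) i 0) ->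
  (forall j, d j 0 != 0 -> 0 < x j 0) ->
  exists2 eps : R, 0 < eps & forall e, `|e| <= eps -> Qbeta A b beta (x + e *: d).
Proof.
move=> [x_rows [x_ge0 x_sum]] d_sum d_rows d_cols.
pose c k := match k with inl i => (A *m d) i 0 | inr j => d j 0 end.
pose s k := match k with inl i => (A *m x) i 0 - (b i)%:R | inr j => x j 0 end.
have [||eps eps_gt0 hs] := @exists_small_scale _ _ c s.
- by case=> [i|j] /=; rewrite ?subr_ge0.
- by case=> [i|j] /= => [/d_rows|/d_cols]; rewrite ?subr_gt0.
exists eps => // e he; split; [|split].
- move=> i; rewrite mulmxDr -scalemxAr mxE [(e *: (A *m d)) i 0]mxE.
  exact: ler_addr_scaled (hs (inl i)) he.
- move=> j; rewrite !mxE; apply: ler_addr_scaled he.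
  by rewrite subr0; apply: (hs (inr j)).
- under eq_bigr do rewrite !mxE.
  by rewrite big_split /= -mulr_sumr d_sum mulr0 addr0.
Qed.

Lemma vertex_midpoint (R : realFieldType) n (P : 'cV[R]_n -> Prop) x d :
  vertex P x -> P (x + d) -> P (x - d) -> d = 0.
Proof.
move=> [_ hv] hp hm.
have d_eqN : d = - d.
  apply: (addrI x); apply: (hv _ _ 2^-1) => //.
  - by rewrite invr_gt0 ltr0n.
  - by rewrite invf_lt1 ?ltr0n ?ltr1n.
  - by apply/matrixP => i j; rewrite !mxE; lra.
have /eqP : (2 : R) *: d = 0 by rewrite scaler_nat mulr2n {1}d_eqN addNr.
by rewrite scaler_eq0 pnatr_eq0 => /eqP.
Qed.

Section Rounding.
Variables (R : realFieldType) (m n : nat) (A : 'M[R]_(m, n)) (b : 'I_m -> nat).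
Variables (beta : nat) (x : 'cV[R]_n) (c0 : nat).
Hypotheses (A_rows : psum_rows A) (x_in : Qbeta A b beta x).
Hypothesis x_c0 : ~ is_int (psum x c0).

Let cls c := `[< is_int (psum x c - psum x c0) >].
Let d := \col_(j < n) ((cls j.+1)%:R - (cls j)%:R : R).

Let cls_eq u v : is_int (psum x u - psum x v) -> cls u = cls v.
Proof.
move=> huv; apply/asboolP/asboolP => h.
  by have := is_intB h huv; congr is_int; ring.
by have := is_intD huv h; congr is_int; ring.
Qed.

Let cls_int c : is_int (psum x c) -> cls c = false.
Proof.
move=> hc; apply/asboolF => h; apply: x_c0.
by have := is_intB hc h; congr is_int; ring.
Qed.

Let psum_x_total : psum x n = beta%:R.
Proof. by rewrite psum_total //; case: x_in => _ []. Qed.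

Let psum_d c : (c <= n)%N -> psum d c = (cls c)%:R.
Proof.
move=> hc; rewrite (psum_telescope (fun c => (cls c)%:R)) // [cls 0]cls_int ?subr0 //.
by rewrite psum0; exists 0.
Qed.

Let cls_n : cls n = false.
Proof. by rewrite cls_int // psum_x_total; apply: is_int_nat. Qed.

Let d_sum : \sum_j d j 0 = 0.
Proof. by rewrite -(psum_total d (leqnn n)) psum_d // cls_n. Qed.

Let d_rows i : (A *m d) i 0 != 0 -> (b i)%:R < (A *m x) i 0.
Proof.
have [u [v [w Ai]]] := A_rows i.
move=> dAi; rewrite lt_def (proj1 x_in) andbT; apply: contraNneq dAi => bAi.
rewrite Ai (psum_d (ltn_ord u)) (psum_d (ltn_ord v)) (psum_d (leqnn n)).
rewrite cls_n mul0rn addr0 (@cls_eq u v) ?subrr //.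
have h : is_int (psum x u - psum x v + (beta * w)%:R).
  by rewrite mulrnA -psum_x_total -Ai bAi; apply: is_int_nat.
by have := is_intB h (is_int_nat _ (beta * w)); rewrite addrK.
Qed.

Let d_cols j : d j 0 != 0 -> 0 < x j 0.
Proof.
move=> dj; rewrite lt_def (proj1 (proj2 x_in)) andbT; apply: contraNneq dj => xj0.
rewrite mxE (@cls_eq j.+1 j) ?subrr // psumS addrAC subrr add0r xj0.
by exists 0.
Qed.

Let d_neq0 : (c0 <= n)%N -> d != 0.
Proof.
move=> hc0; apply/eqP => d0; have := psum_d hc0.
rewrite d0 /psum big1 => [|j _]; last by rewrite mxE.
by rewrite /cls asboolT ?subrr; [move/eqP; rewrite eq_sym oner_eq0 | exists 0].
Qed.

Lemma exists_rounding_direction : (c0 <= n)%N ->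
  exists d : 'cV[R]_n, [/\ d != 0, \sum_j d j 0 = 0,
    forall i, (A *m d) i 0 != 0 -> (b i)%:R < (A *m x) i 0 &
    forall j, d j 0 != 0 -> 0 < x j 0].
Proof. by move=> hc0; exists d; split; [apply: d_neq0 | | |]. Qed.

End Rounding.

Lemma vertex_psum_int (R : realFieldType) m n (A : 'M[R]_(m, n)) b beta x c :
  psum_rows A -> vertex (Qbeta A b beta) x -> (c <= n)%N -> is_int (psum x c).
Proof.
move=> A_rows x_vtx hc; apply: contrapT => x_c.
have [d [d_neq0 d_sum d_rows d_cols]] :=
  exists_rounding_direction A_rows x_vtx.1 x_c hc.
have [eps eps_gt0 x_pert] := Qbeta_perturb x_vtx.1 d_sum d_rows d_cols.
have eps_d0 : eps *: d = 0.
  apply: vertex_midpoint x_vtx (x_pert _ _) _; first by rewrite gtr0_norm.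
  by rewrite -scaleNr; apply: x_pert; rewrite normrN gtr0_norm.
by move/eqP: eps_d0; rewrite scaler_eq0 (gt_eqF eps_gt0) (negbTE d_neq0).
Qed.

Lemma integral_psum_rows (R : realFieldType) m n (A : 'M[R]_(m, n)) b beta :
  psum_rows A -> integral_polytope (Qbeta A b beta).
Proof.
move=> A_rows x x_vtx j.
have -> : x j 0 = psum x j.+1 - psum x j by rewrite psumS addrAC subrr add0r.
by apply: is_intB; apply: (vertex_psum_int A_rows x_vtx); rewrite // ltnW.
Qed.

Theorem lemma3p1 (R : realFieldType) (m n : nat) (A : 'M[R]_(m, n))
    (b : 'I_m -> nat) (beta : nat) :
  circular A -> integral_polytope (Qbeta A b beta).
Proof. by move=> /circular_psum_rows; apply: integral_psum_rows. Qed.
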